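(* Let $n\ge 1$ be an integer and let $\mathbb{Z}_5^n$ denote the elementary abelian $5$-group of rank $n$. Suppose that $A\subseteq\mathbb{Z}_5^n$ is sum-free. If $|A|>\frac32\cdot5^{n-1}$, then there are a proper subgroup $H<\mathbb{Z}_5^n$ and an element $e\notin H$ such that $A\subseteq(e+H)\cup(-e+H)$.
   Context: A subset $S$ of an abelian group is sum-free if there are no $x,y,z\in S$ (not necessarily distinct) with $x+y=z$; equivalently $S\cap 2S=\emptyset$, where $2S=\{s_1+s_2: s_1,s_2\in S\}$. *)

From HB Require Import structures.
From mathcomp Require Import all_boot all_order all_algebra.
Set Implicit Arguments. Unset Strict Implicit. Unset Printing Implicit Defensive.
Import GRing.Theory.
Local Open Scope ring_scope.

Definition Z5n (n : nat) := 'rV['Z_5]_n.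

Definition sum_free (V : zmodType) (S : pred V) : Prop :=
  forall x y z, x \in S -> y \in S -> z \in S -> x + y != z.

Definition is_subgroup (V : finZmodType) (H : {set V}) : Prop :=
  [/\ 0 \in H, forall x y, x \in H -> y \in H -> x + y \in H
    & forall x, x \in H -> - x \in H].

Definition coset_add (V : finZmodType) (e : V) (H : {set V}) : {set V} :=
  [set e + h | h in H].

From HB Require Import structures.
From mathcomp Require Import all_boot all_order all_algebra.
From mathcomp Require Import lra zify.
Import GRing.Theory Num.Theory.
Local Open Scope ring_scope.
Set Implicit Arguments. Unset Strict Implicit. Unset Printing Implicit Defensive.

(* For a nonzero linear functional u let a_c be the number of x in A with
   u.x = c.  If A lies on two opposite levels u.x = c, -c, the kernel of u is
   the required subgroup.  Otherwise sum-freeness (a_c + a_d <= 5^(n-1) as soon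
   as level c + d, resp. c, is occupied) together with |A| > 3/2 5^(n-1)
   forces 2 a_c <= 5^(n-1) for every c, and under these constraints a
   nonnegative certificate bounds |A|^3 by the three moments sum a_c^2,
   sum a_c a_2c and sum a_c a_d a_(c+d).  Summing over all u turns the moments
   into 5^(n-1) times the numbers of pairs, doublings (x, y) and triples
   (x, y, z) of A, plus (5^n - 5^(n-1)) times the numbers of solutions of
   x = y, y = 2x and x + y = z; for sum-free A only the first has solutions,
   and the totals contradict |A| > 3/2 5^(n-1). *)

Section Functionals.
Variables (F : finFieldType) (n : nat).
Implicit Types (u w x y : 'rV[F]_n) (c : F).

Definition dot u x : F := \sum_j u 0 j * x 0 j.

Lemma dotC u x : dot u x = dot x u.
Proof. by apply: eq_bigr => j _; rewrite mulrC. Qed.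

Lemma dot0l x : dot 0 x = 0.
Proof. by rewrite /dot big1 // => j _; rewrite mxE mul0r. Qed.

Lemma dot0r u : dot u 0 = 0.
Proof. by rewrite dotC dot0l. Qed.

Lemma dotDr u x y : dot u (x + y) = dot u x + dot u y.
Proof. by rewrite /dot -big_split; apply: eq_bigr => j _; rewrite mxE mulrDr. Qed.

Lemma dotNr u x : dot u (- x) = - dot u x.
Proof. by rewrite /dot -sumrN; apply: eq_bigr => j _; rewrite mxE mulrN. Qed.

Lemma dotBr u x y : dot u (x - y) = dot u x - dot u y.
Proof. by rewrite dotDr dotNr. Qed.

Lemma dot_delta u j c : dot u (c *: delta_mx 0 j : 'rV_n) = u 0 j * c.
Proof.
rewrite /dot (bigD1 j) //= big1 ?addr0 => [|k /negbTE kj]; rewrite !mxE ?eqxx ?kj.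
  by rewrite mulr1.
by rewrite mulr0 mulr0.
Qed.

Lemma card_rV : #|{: 'rV[F]_n}| = (#|F| ^ n)%N.
Proof. by rewrite card_mx mul1n. Qed.

Lemma card_dot_eq w c : w != 0 -> #|[set x | dot w x == c]| = (#|F| ^ n.-1)%N.
Proof.
move=> w0; have [j wj0] : exists j, w 0 j != 0.
  apply/existsP; apply: contraR w0 => /existsPn w_eq0; apply/eqP/rowP => j.
  by rewrite mxE; apply/eqP; have := w_eq0 j; rewrite negbK.
pose K := [set x | dot w x == 0].
have fibreE d : #|[set x | dot w x == d]| = #|K|.
  pose t : 'rV[F]_n := (d / w 0 j) *: delta_mx 0 j.
  have dot_t : dot w t = d by rewrite dot_delta mulrC divfK.
  rewrite -(card_imset K (addIr t)); apply: eq_card => x; rewrite inE.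
  apply/eqP/imsetP => [dx | [y]].
    by exists (x - t); rewrite ?subrK // inE dotBr dx dot_t subrr.
  by rewrite inE => /eqP dy ->; rewrite dotDr dy dot_t add0r.
have n_gt0 : (0 < n)%N := leq_ltn_trans (leq0n j) (ltn_ord j).
have : (#|F| ^ n = \sum_(d : F) #|K|)%N.
  rewrite -card_rV -[in LHS]sum1_card (partition_big (dot w) predT) //=.
  apply: eq_bigr => d _; rewrite -(fibreE d) -sum1_card.
  by apply: eq_bigl => x; rewrite inE.
have -> : (#|F| ^ n = #|F| * #|F| ^ n.-1)%N by rewrite -expnS prednK.
rewrite sum_nat_const fibreE => /eqP; rewrite eqn_pmul2l => [/eqP //|].
by apply/card_gt0P; exists 0.
Qed.

Lemma sum_dot_eq0 w :
  (\sum_u (dot u w == 0%R : nat) = if w == 0%R then #|F| ^ n else #|F| ^ n.-1)%N.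
Proof.
have -> : (\sum_u (dot u w == 0%R : nat) = #|[set u | dot w u == 0%R]|)%N.
  by rewrite -sum1_card [RHS]big_mkcond; apply: eq_bigr => u _; rewrite inE dotC.
case: eqP => [->|/eqP w0]; last exact: card_dot_eq.
by rewrite -card_rV; apply: eq_card => u; rewrite inE dot0l eqxx.
Qed.

End Functionals.

Lemma leq_card_disjoint (T : finType) (X Y Z : {set T}) :
  [disjoint X & Y] -> X \subset Z -> Y \subset Z -> (#|X| + #|Y| <= #|Z|)%N.
Proof.
move=> dXY sXZ sYZ.
have /eqP <- : #|X :|: Y| == (#|X| + #|Y|)%N by rewrite (leq_card_setU X Y).2.
by apply: subset_leq_card; rewrite subUset sXZ.
Qed.

Section Slices.
Variables (F : finFieldType) (n : nat) (A : {set 'rV[F]_n}).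
Implicit Types (u x y z : 'rV[F]_n) (c d : F).

Definition slice u c := #|[set x in A | dot u x == c]|.

Lemma slice_gt0P u c : reflect (exists2 x, x \in A & dot u x = c) (0 < slice u c)%N.
Proof.
apply: (iffP card_gt0P) => [[x] | [x xA <-]]; last by exists x; rewrite inE xA eqxx.
by rewrite inE => /andP [xA /eqP]; exists x.
Qed.

Lemma slice_sub u c : [set x in A | dot u x == c] \subset [set x | dot u x == c].
Proof. by apply/subsetP => x; rewrite !inE => /andP []. Qed.

Lemma sum_slice_eq u c : (\sum_(x in A) (dot u x == c : nat))%N = slice u c.
Proof.
rewrite /slice -sum1_card big_mkcond [RHS]big_mkcond.
by apply: eq_bigr => x _; rewrite inE; case: (x \in A).
Qed.

Lemma sum_slices u (G : F -> nat) :
  (\sum_(x in A) G (dot u x) = \sum_c slice u c * G c)%N.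
Proof.
rewrite (partition_big (dot u) predT) //=; apply: eq_bigr => c _.
rewrite (eq_bigr (fun _ => G c)) => [|x /andP [_ /eqP ->] //].
by rewrite sum_nat_const; congr (_ * _)%N; apply: eq_card => x; rewrite inE.
Qed.

Lemma card_slices u : #|A| = (\sum_c slice u c)%N.
Proof.
by rewrite -sum1_card (sum_slices u (fun _ => 1%N)); apply: eq_bigr => c _; rewrite muln1.
Qed.

Lemma slices_outside u (P : pred F) :
  ~~ [forall x in A, dot u x \in P] -> exists2 c, (0 < slice u c)%N & c \notin P.
Proof.
by case/forall_inPn => x xA xP; exists (dot u x) => //; apply/slice_gt0P; exists x.
Qed.

Definition collisions u :=
  (\sum_(x in A) \sum_(y in A) (dot u x == dot u y))%N.
Definition doublings u :=
  (\sum_(x in A) \sum_(y in A) (dot u y == dot u x + dot u x)%R)%N.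
Definition schur_triples u :=
  (\sum_(x in A) \sum_(y in A) \sum_(z in A) (dot u z == dot u x + dot u y)%R)%N.

Lemma collisionsE u : collisions u = (\sum_c slice u c ^ 2)%N.
Proof.
rewrite /collisions (eq_bigr (fun x => slice u (dot u x))) => [|x _].
  by rewrite sum_slices.
by rewrite -sum_slice_eq; apply: eq_bigr => y _; rewrite eq_sym.
Qed.

Lemma doublingsE u : doublings u = (\sum_c slice u c * slice u (c + c)%R)%N.
Proof.
rewrite /doublings (eq_bigr (fun x => slice u (dot u x + dot u x))) => [|x _].
  by rewrite (sum_slices u (fun c => slice u (c + c))).
exact: sum_slice_eq.
Qed.

Lemma schur_triplesE u :
  schur_triples u = (\sum_c \sum_d slice u c * slice u d * slice u (c + d)%R)%N.
Proof.
pose G c := (\sum_d slice u d * slice u (c + d)%R)%N.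
rewrite /schur_triples (eq_bigr (fun x => G (dot u x))).
  rewrite sum_slices; apply: eq_bigr => c _; rewrite big_distrr.
  by apply: eq_bigr => d _; rewrite /= mulnA.
move=> x _; rewrite /G -(sum_slices u (fun d => slice u (dot u x + d)%R)).
by apply: eq_bigr => y _; rewrite sum_slice_eq.
Qed.

Lemma moments0 :
  [/\ collisions 0 = (#|A| ^ 2)%N, doublings 0 = (#|A| ^ 2)%N
    & schur_triples 0 = (#|A| ^ 3)%N].
Proof.
have sum_true (G : 'rV[F]_n -> bool) :
    (forall x, G x) -> (\sum_(x in A) G x)%N = #|A|.
  by move=> G_true; rewrite -sum1_card; apply: eq_bigr => x _; rewrite G_true.
rewrite /collisions /doublings /schur_triples; split.
- rewrite (eq_bigr (fun _ => #|A|)) ?sum_nat_const ?mulnn // => x _.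
  by apply: sum_true => y; rewrite !dot0l.
- rewrite (eq_bigr (fun _ => #|A|)) ?sum_nat_const ?mulnn // => x _.
  by apply: sum_true => y; rewrite !dot0l addr0.
rewrite (eq_bigr (fun _ => #|A| ^ 2)%N) ?sum_nat_const -?expnS // => x _.
rewrite (eq_bigr (fun _ => #|A|)) ?sum_nat_const ?mulnn // => y _.
by apply: sum_true => z; rewrite !dot0l addr0.
Qed.

Lemma sum_collisions : (0 < n)%N ->
  (\sum_u collisions u = #|A| * (#|A| + #|F|.-1) * #|F| ^ n.-1)%N.
Proof.
move=> n_gt0; rewrite /collisions exchange_big /= -mulnA -sum_nat_const.
apply: eq_bigr => x xA; rewrite exchange_big /=.
pose m := (#|F| ^ n.-1)%N.
rewrite (eq_bigr (fun y => m + (x == y) * (#|F|.-1 * m)))%N => [|y _].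
  rewrite big_split /= sum_nat_const -big_distrl /= (bigD1 x) //= eqxx.
  rewrite big1 => [|y]; first by rewrite addn0 mul1n mulnDl.
  by rewrite eq_sym => /andP [_ /negbTE ->].
rewrite (eq_bigr (fun u => dot u (x - y) == 0 : nat)) => [|u _].
  2: by rewrite dotBr subr_eq0.
rewrite sum_dot_eq0 subr_eq0; case: eqP => _; last by rewrite addn0.
have q_gt0 : (0 < #|F|)%N by apply/card_gt0P; exists 0.
by rewrite mul1n -mulSn prednK // -expnS prednK.
Qed.

Hypothesis sfA : sum_free (mem A).

(* A_c and z - A_d, for z in A at level c + d, are disjoint inside the
   hyperplane u.x = c; similarly A_(c+d) and x + A_d for x in A at level c. *)
Lemma slicesD_le u c d : u != 0 ->
  (0 < slice u (c + d)%R)%N -> (slice u c + slice u d <= #|F| ^ n.-1)%N.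
Proof.
move=> u0 /slice_gt0P [z zA dz].
rewrite -(card_dot_eq c u0) /slice.
rewrite -(card_imset [set y in A | dot u y == d] (subrI z)).
apply: leq_card_disjoint.
- apply/pred0P => x /=; apply/negP; rewrite inE => /andP [/andP [xA _]].
  case/imsetP => y; rewrite inE => /andP [yA _] xE.
  by have := sfA xA yA zA; rewrite xE subrK eqxx.
- exact: slice_sub.
- apply/subsetP => x /imsetP [y]; rewrite !inE => /andP [_ /eqP dy] ->.
  by rewrite dotBr dz dy addrK.
Qed.

Lemma slices_shift_le u c d : u != 0 ->
  (0 < slice u c)%N -> (slice u d + slice u (c + d)%R <= #|F| ^ n.-1)%N.
Proof.
move=> u0 /slice_gt0P [x xA dx].
rewrite -(card_dot_eq (c + d) u0) /slice addnC.
rewrite -(card_imset [set y in A | dot u y == d] (addrI x)).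
apply: leq_card_disjoint.
- apply/pred0P => z /=; apply/negP; rewrite inE => /andP [/andP [zA _]].
  case/imsetP => y; rewrite inE => /andP [yA _] zE.
  by have := sfA xA yA zA; rewrite zE eqxx.
- exact: slice_sub.
- apply/subsetP => z /imsetP [y]; rewrite !inE => /andP [_ /eqP dy] ->.
  by rewrite dotDr dx dy.
Qed.

Lemma sum_doublings : (\sum_u doublings u = #|A| ^ 2 * #|F| ^ n.-1)%N.
Proof.
rewrite /doublings exchange_big /= -mulnA -sum_nat_const.
apply: eq_bigr => x xA.
rewrite exchange_big /= -sum_nat_const; apply: eq_bigr => y yA.
rewrite (eq_bigr (fun u => dot u (y - (x + x)) == 0 : nat)) => [|u _].
  by rewrite sum_dot_eq0 subr_eq0 eq_sym (negbTE (sfA xA xA yA)).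
by rewrite dotBr dotDr subr_eq0.
Qed.

Lemma sum_schur_triples : (\sum_u schur_triples u = #|A| ^ 3 * #|F| ^ n.-1)%N.
Proof.
rewrite /schur_triples exchange_big /= -!mulnA -sum_nat_const.
apply: eq_bigr => x xA; rewrite exchange_big /= -sum_nat_const.
apply: eq_bigr => y yA; rewrite exchange_big /= -sum_nat_const.
apply: eq_bigr => z zA.
rewrite (eq_bigr (fun u => dot u (z - (x + y)) == 0 : nat)) => [|u _].
  by rewrite sum_dot_eq0 subr_eq0 eq_sym (negbTE (sfA xA yA zA)).
by rewrite dotBr dotDr subr_eq0.
Qed.

End Slices.

Lemma F5_ind (P : 'F_5 -> Prop) : P 0 -> P 1 -> P 2 -> P 3 -> P 4 -> forall c, P c.
Proof.
move=> P0 P1 P2 P3 P4 [[|[|[|[|[|//]]]]] lt_c5];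
  [move: P0 | move: P1 | move: P2 | move: P3 | move: P4]; congr P; exact: val_inj.
Qed.

Lemma sum_F5 (V : nmodType) (G : 'F_5 -> V) :
  \sum_c G c = G 0 + G 1 + G 2 + G 3 + G 4.
Proof.
rewrite !big_ord_recl big_ord0 addr0 !addrA.
by do 4?congr (_ + _); congr G; apply: val_inj.
Qed.

Lemma F5_addE :
  ((1 + 1 = 2 :> 'F_5)%R * (1 + 2 = 3 :> 'F_5)%R * (1 + 3 = 4 :> 'F_5)%R *
   (1 + 4 = 0 :> 'F_5)%R * (2 + 1 = 3 :> 'F_5)%R * (2 + 2 = 4 :> 'F_5)%R *
   (2 + 3 = 0 :> 'F_5)%R * (2 + 4 = 1 :> 'F_5)%R * (3 + 1 = 4 :> 'F_5)%R *
   (3 + 2 = 0 :> 'F_5)%R * (3 + 3 = 1 :> 'F_5)%R * (3 + 4 = 2 :> 'F_5)%R *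
   (4 + 1 = 0 :> 'F_5)%R * (4 + 2 = 1 :> 'F_5)%R * (4 + 3 = 2 :> 'F_5)%R *
   (4 + 4 = 3 :> 'F_5)%R)%type.
Proof. by do !split; apply/eqP. Qed.

Lemma F5_slices_le_half (a : 'F_5 -> nat) (m : nat) :
  (forall c d, (0 < a (c + d)%R)%N -> (a c + a d <= m)%N) ->
  (forall c d, (0 < a c)%N -> (a d + a (c + d)%R <= m)%N) ->
  (exists2 c, (0 < a c)%N & c \notin [:: 1; -1]) ->
  (exists2 c, (0 < a c)%N & c \notin [:: 2; -2]) ->
  (3 * m < 2 * \sum_c a c)%N -> forall c, (2 * a c <= m)%N.
Proof.
move=> sumD shift [c1 a_c1 c1_out] [c2 a_c2 c2_out]; rewrite sum_F5 => big_a.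
have supp1 : [\/ (0 < a 0%R)%N, (0 < a 2%R)%N | (0 < a 3%R)%N].
  move: c1 a_c1 c1_out; apply: F5_ind => // *;
    by [constructor 1 | constructor 2 | constructor 3].
have supp2 : [\/ (0 < a 0%R)%N, (0 < a 1%R)%N | (0 < a 4%R)%N].
  move: c2 a_c2 c2_out; apply: F5_ind => // *;
    by [constructor 1 | constructor 2 | constructor 3].
move=> c; move: (sumD 0 0) (sumD 1 1) (sumD 2 2) (sumD 3 3) (sumD 4 4).
move: (shift 0 1) (shift 0 2) (shift 0 3) (shift 0 4).
move: (shift 1 1) (shift 2 2) (shift 3 3) (shift 4 4).
rewrite !(addr0, add0r, F5_addE) => *.
by elim/F5_ind: c; case: supp1 supp2 => [?|?|?] [?|?|?]; lia.
Qed.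

Lemma F5_moment_ineq (R : realFieldType) (a : 'F_5 -> R) (m : R) :
  (forall c, 0 <= a c) -> (forall c, 2 * a c <= m) -> 3 * m <= 2 * \sum_c a c ->
  11 * m * (\sum_c a c) ^+ 2 + 14 * (\sum_c a c) ^+ 3 <=
  m * (48 * \sum_c a c ^+ 2 + 7 * \sum_c a c * a (c + c))
  + 70 * \sum_c \sum_d a c * a d * a (c + d).
Proof.
move=> a_ge0 a_le; rewrite !sum_F5 !(addr0, add0r, F5_addE).
move: (a_ge0 0) (a_ge0 1) (a_ge0 2) (a_ge0 3) (a_ge0 4).
move: (a_le 0) (a_le 1) (a_le 2) (a_le 3) (a_le 4).
set a0 := a 0; set a1 := a 1; set a2 := a 2; set a3 := a 3; set a4 := a 4.
move=> a0_le a1_le a2_le a3_le a4_le a0_ge0 a1_ge0 a2_ge0 a3_ge0 a4_ge0 big_a.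
(* An LP-found certificate: the difference of the two sides is a nonnegative
   combination of the products weight * square collected below. *)
pose s := a0 + a1 + a2 + a3 + a4.
have sq (w : R) : 0 <= w -> forall x : R, 0 <= w * x ^+ 2.
  by move=> w_ge0 x; exact: mulr_ge0 w_ge0 (sqr_ge0 x).
have /sq m_sq : 0 <= m by lra.
have /sq b1_sq : 0 <= m - 2 * a1 by lra.
have /sq b2_sq : 0 <= m - 2 * a2 by lra.
have /sq b3_sq : 0 <= m - 2 * a3 by lra.
have /sq b4_sq : 0 <= m - 2 * a4 by lra.
have /sq s_sq : 0 <= 2 * s - 3 * m by rewrite /s; lra.
move/sq: a0_ge0 => a0_sq; move/sq: a1_ge0 => a1_sq; move/sq: a2_ge0 => a2_sq.
move: (m_sq (a2 - a3)) (m_sq (a1 - a2 + a3 - a4)) (m_sq (a1 + a2 - a3 - a4))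
  (m_sq (a0 - a1 - a3 + a4)).
move: (a0_sq (a0 - a1 - a3 + a4)) (a0_sq (a0 - a1 + a2 - a3)) (a0_sq (a0 - a4))
  (a0_sq (a0 + a1 - a3 - a4)) (a1_sq (a1 + a2 - a3 - a4)) (a2_sq (a0 - a1 - a2 + a3)).
move: (b1_sq (a1 - a2 + a3 - a4)) (b1_sq (a0 - a1)) (b1_sq (a0 - a1 + a3 - a4))
  (b1_sq (a0 - a1 + a2 - a4)) (b1_sq (a0 - a2 + a3 - a4)).
move: (b2_sq (a1 - a2 + a3 - a4)) (b2_sq (a0 - a1 - a2 + a4))
  (b2_sq (a0 - a1 - a3 + a4)) (b2_sq (a0 + a1 - a2 - a3)) (b2_sq (a0 + a1 - a3 - a4)).
move: (b3_sq (a1 + a2 - a3 - a4)) (b3_sq (a0 - a2 - a3 + a4)) (b3_sq (a0 - a3))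
  (b3_sq (a0 + a1 - a2 - a3)) (b3_sq (a0 + a1 - a2 - a4)).
move: (b4_sq (a0 - a1 - a2 + a3)) (b4_sq (a0 - a1 + a3 - a4))
  (b4_sq (a0 - a1 + a2 - a3)) (b4_sq (a0 - a2 + a3 - a4)) (b4_sq (a0 + a2 - a3 - a4)).
move: (s_sq (a3 - a4)) (s_sq (a2 - a4)) (s_sq (a1 - a2 + a3 - a4)) (s_sq (a1 - a4))
  (s_sq (a0 - a1 - a2 + a3)) (s_sq (a0 - a1 - a3 + a4)) (s_sq (a0 - a1 + a2 - a4))
  (s_sq (a0 - a4)) (s_sq (a0 + a2 - a3 - a4)) (s_sq (a0 + a1 - a2 - a3)).
rewrite /s; lra.
Qed.

Lemma card_F5 : #|'F_5| = 5%N.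
Proof. exact: card_Fp. Qed.

Lemma spread_moment_ineq n (A : {set 'rV['F_5]_n}) u :
  u != 0 -> sum_free (mem A) ->
  (exists2 c, (0 < slice A u c)%N & c \notin [:: 1; -1]) ->
  (exists2 c, (0 < slice A u c)%N & c \notin [:: 2; -2]) ->
  (3 * 5 ^ n.-1 < 2 * #|A|)%N ->
  (11 * 5 ^ n.-1 * #|A| ^ 2 + 14 * #|A| ^ 3 <=
   5 ^ n.-1 * (48 * collisions A u + 7 * doublings A u)
   + 70 * schur_triples A u)%N.
Proof.
move=> u0 sfA spread1 spread2 big_A.
have card_F5_exp : (#|'F_5| ^ n.-1 = 5 ^ n.-1)%N by rewrite card_F5.
have half c : (2 * slice A u c <= 5 ^ n.-1)%N.
  apply: (F5_slices_le_half (a := slice A u)) spread1 spread2 _ c.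
  - by move=> c' d; rewrite -card_F5_exp; apply: slicesD_le.
  - by move=> c' d; rewrite -card_F5_exp; apply: slices_shift_le.
  by rewrite -card_slices.
have half_rat c : 2 * (slice A u c)%:R <= (5 ^ n.-1)%:R :> rat.
  by rewrite -natrM ler_nat.
have big_rat : 3 * (5 ^ n.-1)%:R <= 2 * \sum_c (slice A u c)%:R :> rat.
  by rewrite -natr_sum -!natrM ler_nat ltnW // -card_slices.
have := F5_moment_ineq (fun c => ler0n _ _) half_rat big_rat.
rewrite collisionsE doublingsE schur_triplesE (card_slices A u) -(ler_nat rat).
rewrite !sum_F5 /= !(addr0, add0r, F5_addE) => moment_rat.
lra.
Qed.

(* With m = 5^(n-1) and s = |A|, SL and SR stand for the sums over u != 0 of
   the two sides of [spread_moment_ineq].  Averaging leaves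
   s (44 m s + 56 s^2) <= s (192 m^2), and 44 * 3/2 + 56 * 9/4 = 192. *)
Lemma averaged_moments_absurd (m s SL SR : nat) :
  (0 < m)%N -> (3 * m < 2 * s)%N -> (SL <= SR)%N ->
  (11 * m * s ^ 2 + 14 * s ^ 3 + SL = 5 * m * (11 * m * s ^ 2 + 14 * s ^ 3))%N ->
  (m * (48 * s ^ 2 + 7 * s ^ 2) + 70 * s ^ 3 + SR =
     m * (48 * (s * (s + 4) * m) + 7 * (s ^ 2 * m)) + 70 * (s ^ 3 * m))%N ->
  False.
Proof.
move=> m_gt0 big_s le_S sum_L sum_R.
have s_gt0 : (0 < s)%N by lia.
have : (s * (44 * m * s + 56 * s ^ 2) <= s * (192 * m ^ 2))%N by nia.
by rewrite leq_pmul2l //; nia.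
Qed.

Lemma exists_two_level_functional n (A : {set 'rV['F_5]_n}) :
  (0 < n)%N -> sum_free (mem A) -> (3 * 5 ^ n.-1 < 2 * #|A|)%N ->
  exists u c, [/\ u != 0, c != 0 & {in A, forall x, dot u x \in [:: c; - c]}].
Proof.
move=> n_gt0 sfA big_A.
pose two_level u c := [forall x in A, dot u x \in [:: c; - c]].
have [/existsP [u /andP [u0 /orP h]] | no_dir] :=
  boolP [exists u, (u != 0) && (two_level u 1 || two_level u 2)].
  by case: h => /forall_inP Au; [exists u, 1 | exists u, 2].
exfalso; have [coll0 dbl0 schur0] := moments0 A.
move: big_A coll0 dbl0 schur0; set m := (5 ^ n.-1)%N; set s := #|A|.
move=> big_A coll0 dbl0 schur0.
pose R u :=
  (m * (48 * collisions A u + 7 * doublings A u) + 70 * schur_triples A u)%N.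
pose L := (11 * m * s ^ 2 + 14 * s ^ 3)%N.
have L_le u : u != 0 -> (L <= R u)%N.
  move=> u0; move/existsPn/(_ u): no_dir; rewrite u0 negb_or => /andP [h1 h2].
  by apply: spread_moment_ineq; rewrite ?u0 //; apply: slices_outside.
have sum_R : (\sum_u R u =
    m * (48 * (s * (s + 4) * m) + 7 * (s ^ 2 * m)) + 70 * (s ^ 3 * m))%N.
  rewrite big_split /= -!big_distrr /= big_split /= -!big_distrr /=.
  by rewrite sum_collisions // sum_doublings // sum_schur_triples // card_F5.
have sum_L : (\sum_(u : 'rV['F_5]_n) L = 5 * m * L)%N.
  by rewrite sum_nat_const card_rV card_F5 -expnS prednK.
have : (\sum_(u : 'rV['F_5]_n | u != 0%R) L <=
         \sum_(u : 'rV['F_5]_n | u != 0%R) R u)%N.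
  by apply: leq_sum => u /L_le.
rewrite (bigD1 (0 : 'rV['F_5]_n)) //= in sum_L.
rewrite (bigD1 (0 : 'rV['F_5]_n)) //= in sum_R.
move: sum_L sum_R; rewrite /R coll0 dbl0 schur0 /L => sum_L sum_R le_sums.
by apply: averaged_moments_absurd le_sums sum_L sum_R; rewrite ?expn_gt0.
Qed.

Lemma kernel_two_cosets (F : finFieldType) n (A : {set 'rV[F]_n}) u c :
  u != 0 -> c != 0 -> {in A, forall x, dot u x \in [:: c; - c]} ->
  exists H : {set 'rV[F]_n},
    [/\ is_subgroup H, H != setT &
        exists e, e \notin H /\ A \subset coset_add e H :|: coset_add (- e) H].
Proof.
move=> u0 c0 Ac.
have [e] : exists e, e \in [set x | dot u x == c].
  apply/set0Pn; rewrite -card_gt0 card_dot_eq // expn_gt0.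
  by apply/orP; left; apply/card_gt0P; exists 0.
rewrite inE => /eqP de.
pose H := [set h | dot u h == 0].
have eH x : (x \in H) = (dot u x == 0) by rewrite inE.
exists H; split.
- split=> [|x y|x]; rewrite !eH ?dot0r ?dotDr ?dotNr //.
    by move=> /eqP -> /eqP ->; rewrite addr0.
  by move=> /eqP ->; rewrite oppr0.
- by apply/negP => /eqP HT; move: (in_setT e); rewrite -HT eH de (negbTE c0).
exists e; split; first by rewrite eH de.
apply/subsetP => x /Ac; rewrite !inE => /orP [] /eqP dx; apply/orP; [left | right].
- by apply/imsetP; exists (x - e); rewrite ?eH ?dotBr ?dx ?de ?subrr // addrC subrK.
- by apply/imsetP; exists (x + e); rewrite ?eH ?dotDr ?dx ?de ?addNr // addrC addrK.
Qed.

Unset Implicit Arguments.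

Theorem theorem3 (n : nat) (A : {set Z5n n}) :
  (1 <= n)%N ->
  sum_free (mem A) ->
  (3 * 5 ^ n.-1 < 2 * #|A|)%N ->
  exists H : {set Z5n n},
    [/\ is_subgroup H, H != [set: Z5n n] &
        exists e : Z5n n, e \notin H /\
          A \subset coset_add e H :|: coset_add (- e) H].
Proof.
move=> n_gt0 sfA big_A.
(* 'Z_5 and 'F_5 are convertible, so A is also a set of vectors over 'F_5. *)
have [u [c [u0 c0 Ac]]] := exists_two_level_functional n_gt0 sfA big_A.
exact: kernel_two_cosets u0 c0 Ac.
Qed.
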